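(* Let $\delta_0>0$. There exists $k_0$ such that for all $k\ge k_0$ and all $\delta\in[\delta_0,1-2/k]$ with $\delta k+k-1$ an odd integer, every point $(b_1,\dots,b_k,b_{12},\dots,b_{(k-1)k})\in KTW_P$ satisfies \[\delta k\alpha+\beta\ge\frac{(\delta^2k-1)|\Delta|}{4}+\frac12 .\]
   Context: $P(x)=\operatorname{sign}(\delta k x_1+\sum_{i=2}^kx_i)$. For $x\in\{-1,1\}^k$ let $p(x)\in\{-1,1\}^{k+\binom k2}$ be the vector $(x_1,\dots,x_k,x_1x_2,x_1x_3,\dots,x_{k-1}x_k)$; $KTW_P$ is the convex hull of $\{p(x):P(x)=1\}$, with coordinates named $b_i$ ($i\in[k]$) and $b_{ij}$ ($i<j$). Define $\alpha=b_1$, $\beta=\sum_{i=2}^kb_i$, $E=\frac{\delta^2k^2}{2}-\frac k2+1$, and $\Delta$ by $\sum_{2\le i<j\le k}b_{ij}=E(1+\Delta)$. *)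

From HB Require Import structures.
From mathcomp Require Import all_boot all_order all_algebra.
Set Implicit Arguments. Unset Strict Implicit. Unset Printing Implicit Defensive.
Import Order.TTheory GRing.Theory Num.Theory.
Local Open Scope ring_scope.

Section KTW.
Variable R : archiRealFieldType.

(* a point of {-1,1}^k is encoded by a boolean finite function; pm maps true |-> 1, false |-> -1 *)
Definition pm (b : bool) : R := if b then 1 else -1.

(* index i : 'I_k with val i = 0 is the paper's coordinate 1 *)
Definition Pfun (delta : R) (k : nat) (x : {ffun 'I_k -> bool}) : R :=
  Num.sg (\sum_(i < k) (if val i == 0%N then delta * k%:R else 1) * pm (x i)).

(* (b1, b2) lies in KTW_P = conv {p(x) : P(x) = 1}, where p(x) has coordinates
   b_i = x_i and b_ij = x_i x_j (i < j); entries b2 i j with i >= j are not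
   coordinates of the point and are unconstrained. *)
Definition in_KTW (delta : R) (k : nat) (b1 : 'I_k -> R) (b2 : 'I_k -> 'I_k -> R) : Prop :=
  exists lam : {ffun 'I_k -> bool} -> R,
    [/\ forall x, 0 <= lam x,
        forall x, Pfun delta x != 1 -> lam x = 0,
        \sum_x lam x = 1,
        forall i, b1 i = \sum_x lam x * pm (x i) &
        forall i j, (val i < val j)%N -> b2 i j = \sum_x lam x * (pm (x i) * pm (x j))].

Definition alpha (k : nat) (b1 : 'I_k -> R) : R := \sum_(i < k | val i == 0%N) b1 i.
Definition beta (k : nat) (b1 : 'I_k -> R) : R := \sum_(i < k | (0 < val i)%N) b1 i.
Definition Ek (delta : R) (k : nat) : R := delta ^+ 2 * k%:R ^+ 2 / 2 - k%:R / 2 + 1.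
(* Delta defined by sum_{2<=i<j<=k} b_ij = E (1 + Delta) *)
Definition Delta (delta : R) (k : nat) (b2 : 'I_k -> 'I_k -> R) : R :=
  (\sum_(i < k) \sum_(j < k | (0 < val i)%N && (val i < val j)%N) b2 i j) / Ek delta k - 1.

End KTW.

From HB Require Import structures.
From mathcomp Require Import all_boot all_order all_algebra.
From mathcomp.algebra_tactics Require Import ring lra.
From mathcomp Require Import zify.
Import Order.TTheory GRing.Theory Num.Theory.
Local Open Scope ring_scope.

(* Write k = n + 1, K = k, D = delta K, and for a vertex x of the
   cube let  t(x) = D x_1 + s(x)  with  s(x) = x_2 + ... + x_k.  A point of
   KTW_P is a convex combination  sum_x lam_x p(x)  of vertices with P(x) = 1.
   - The objective  delta k alpha + beta  is the average of t, and Delta is the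
     average of  g(x) = (s(x)^2 - D^2 - 1) / (D^2 - K + 2),  because
     sum_{2<=i<j} x_i x_j = (s(x)^2 - n)/2 and 2E = D^2 - K + 2.
   - The parity hypothesis makes t(x) an integer, so P(x) = 1 forces t(x) >= 1.
   - An elementary inequality gives, at every such vertex,
     |s^2 - D^2 - 1| <= K (4t - 2), whence  c |g(x)|/4 + 1/2 <= t(x)  with
     c = delta^2 k - 1 = D^2/K - 1 (when c > 0).
   - Averaging this pointwise bound (triangle inequality for |.|) yields the
     theorem, for every k; the threshold k0 = 0 suffices. *)

Lemma sqr_sum_ord (R : comNzRingType) n (a : 'I_n -> R) :
  (\sum_i a i) ^+ 2 =
    \sum_i a i ^+ 2 + 2 * \sum_(i : 'I_n) \sum_(j : 'I_n | (i < j)%N) a i * a j.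
Proof.
rewrite expr2 big_distrlr /=.
have row i : \sum_j a i * a j = a i ^+ 2 + \sum_(j : 'I_n | (i < j)%N) a i * a j
   + \sum_(j : 'I_n | (j < i)%N) a i * a j.
  rewrite (bigD1 i) //= -expr2 -addrA; congr (_ + _).
  rewrite (bigID (fun j : 'I_n => (i < j)%N)) /=.
  by congr (_ + _); apply: eq_bigl => j; rewrite -val_eqE /=; case: ltngtP.
have below_above : \sum_(i : 'I_n) \sum_(j : 'I_n | (j < i)%N) a i * a j
        = \sum_(i : 'I_n) \sum_(j : 'I_n | (i < j)%N) a i * a j.
  rewrite (exchange_big_dep xpredT) //=.
  by apply: eq_bigr => j _; apply: eq_bigr => i _; rewrite mulrC.
rewrite (eq_bigr _ (fun i _ => row i)) !big_split /= below_above; ring.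
Qed.

Lemma average_bound {R : realFieldType} {T : finType} {lam f g : T -> R} {c : R} :
  0 <= c -> (forall x, 0 <= lam x) -> \sum_x lam x = 1 ->
  (forall x, lam x != 0 -> c * `|g x| / 4 + 1 / 2 <= f x) ->
  c * `|\sum_x lam x * g x| / 4 + 1 / 2 <= \sum_x lam x * f x.
Proof.
move=> c0 lam0 lam1 fg.
have norm_avg : `|\sum_x lam x * g x| <= \sum_x lam x * `|g x|.
  apply: le_trans (ler_norm_sum _ _ _) _.
  by apply: ler_sum => x _; rewrite normrM ger0_norm.
have avg_f : \sum_x lam x * (c * `|g x| / 4 + 1 / 2) <= \sum_x lam x * f x.
  apply: ler_sum => x _; have [->|lx] := eqVneq (lam x) 0; first by rewrite !mul0r.
  by apply: ler_wpM2l; [exact: lam0 | exact: fg].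
have split_avg : \sum_x lam x * (c * `|g x| / 4 + 1 / 2)
    = c / 4 * \sum_x lam x * `|g x| + 1 / 2 * \sum_x lam x.
  by rewrite !mulr_sumr -big_split /=; apply: eq_bigr => x _; ring.
rewrite split_avg lam1 in avg_f.
have := ler_wpM2l c0 norm_avg.
move: avg_f; move: (\sum_x lam x * `|g x|) (\sum_x lam x * f x) => S F hF hS.
have : c / 4 * S = c * S / 4 by ring.
lra.
Qed.

Lemma vertex_ineq {R : realFieldType} {K D s t e : R} :
  1 <= K -> -(K - 1) <= s <= K - 1 -> 0 <= D <= K -> 1 <= t ->
  (e = 1 \/ e = -1) -> t = D * e + s ->
  `|s ^+ 2 - D ^+ 2 - 1| <= K * (4 * t - 2).
Proof.
move=> hK /andP[hs1 hs2] /andP[hD1 hD2] ht he et; rewrite ler_norml.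
have h1 : 0 <= K * (t - 1) by apply: mulr_ge0; lra.
case: he => e1; rewrite e1 in et; apply/andP; split.
- have : 0 <= (K - D) * t by apply: mulr_ge0; lra.
  have : 0 <= (t - 1) * (t + 1 + 2 * K) by apply: mulr_ge0; lra.
  nra.
- have : 0 <= (K - s + D) * t by apply: mulr_ge0; lra.
  nra.
- have : 0 <= (t + 2 * D) * t by apply: mulr_ge0; lra.
  nra.
- have : 0 <= (2 * K - s - D) * t by apply: mulr_ge0; lra.
  nra.
Qed.

(* Dividing the previous inequality by 2E = D^2 - K + 2 = cK + 2, where
   c = D^2/K - 1 > 0, gives the pointwise bound to be averaged. *)
Lemma vertex_bound {R : realFieldType} {K D s t e : R} :
  1 <= K -> -(K - 1) <= s <= K - 1 -> 0 <= D <= K -> 1 <= t ->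
  (e = 1 \/ e = -1) -> t = D * e + s -> K < D ^+ 2 ->
  (D ^+ 2 / K - 1) * `|(s ^+ 2 - D ^+ 2 - 1) / (D ^+ 2 - K + 2)| / 4 + 1 / 2 <= t.
Proof.
move=> hK hs hD ht he et hKD.
have := vertex_ineq hK hs hD ht he et.
set c := D ^+ 2 / K - 1; set G := `|s ^+ 2 - D ^+ 2 - 1| => hG.
have cK : c * K = D ^+ 2 - K by rewrite /c; field; lra.
have c0 : 0 < c by rewrite /c subr_gt0 ltr_pdivlMr; lra.
have E0 : 0 < D ^+ 2 - K + 2 by lra.
rewrite normrM (gtr0_norm (x := (D ^+ 2 - K + 2)^-1)) ?invr_gt0 // -/G.
have cG : c * G <= (c * K) * (4 * t - 2) by rewrite -mulrA; apply: ler_wpM2l => //; exact: ltW.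
have : c * (G / (D ^+ 2 - K + 2)) <= 4 * t - 2.
  rewrite mulrA ler_pdivrMr //; rewrite cK in cG; nra.
lra.
Qed.

Section Vertices.
Context {R : archiRealFieldType} {n : nat}.
Local Notation K := (n.+1%:R : R).
Local Notation vertex := {ffun 'I_n.+1 -> bool}.
Implicit Types x : vertex.

Lemma pm_sq (b : bool) : pm R b ^+ 2 = 1.
Proof. by case: b; rewrite /pm ?sqrrN expr1n. Qed.

Definition tail (x : vertex) : R := \sum_(i < n.+1 | (0 < val i)%N) pm R (x i).

Definition form (delta : R) (x : vertex) : R := delta * K * pm R (x ord0) + tail x.

Lemma sum_tail (V : nmodType) (F : 'I_n.+1 -> V) :
  \sum_(i < n.+1 | (0 < val i)%N) F i = \sum_(i < n) F (lift ord0 i).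
Proof. by rewrite big_mkcond big_ord_recl /= add0r. Qed.

Lemma tail_bound x : -(K - 1) <= tail x <= K - 1.
Proof.
have -> : K - 1 = \sum_(i < n) (1 : R) by rewrite sumr_const card_ord -natr1 addrK.
rewrite /tail sum_tail -sumrN.
by apply/andP; split; apply: ler_sum => i _; case: (x _); rewrite /pm; lra.
Qed.

Lemma PfunE delta x : Pfun delta x = Num.sg (form delta x).
Proof.
rewrite /Pfun big_ord_recl /form /tail sum_tail /=; congr (Num.sg (_ + _)).
by apply: eq_bigr => i _; rewrite mul1r.
Qed.

(* Under the parity hypothesis t(x) is an integer, so P(x) = 1 forces t(x) >= 1. *)
Lemma form_ge1 {delta : R} {z : int} {x} :
  delta * K + K - 1 = (2 * z + 1)%:~R -> Pfun delta x = 1 -> 1 <= form delta x.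
Proof.
move=> parity; rewrite PfunE => /eqP; rewrite sgr_cp0.
pose pmz (b : bool) : int := if b then 1 else -1.
have pmE b : pm R b = (pmz b)%:~R by case: b.
have DE : delta * K = (2 * z + 1 - n%:Z)%:~R.
  by rewrite rmorphB /= -parity -natr1 -[(n%:Z)%:~R]/(n%:R : R); lra.
have -> : form delta x =
    ((2 * z + 1 - n%:Z) * pmz (x ord0) + \sum_(i < n.+1 | (0 < val i)%N) pmz (x i))%:~R.
  rewrite /form /tail rmorphD rmorphM /= -DE rmorph_sum /= pmE.
  by congr (_ + _); apply: eq_bigr => i _; rewrite pmE.
rewrite ltr0z -[1 : R]/((1 : int)%:~R) ler_int; lia.
Qed.

Lemma pair_sum_tail x :
  \sum_(i < n.+1) \sum_(j < n.+1 | (0 < val i)%N && (val i < val j)%N)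
     pm R (x i) * pm R (x j) = (tail x ^+ 2 - n%:R) / 2.
Proof.
pose a (i : 'I_n.+1) := if (0 < val i)%N then pm R (x i) else 0.
have tailE : tail x = \sum_i a i by rewrite /tail big_mkcond.
have squares : \sum_i a i ^+ 2 = n%:R.
  rewrite big_ord_recl /a /= expr0n add0r.
  by under eq_bigr => i _ do rewrite pm_sq; rewrite sumr_const card_ord.
have cross : \sum_(i : 'I_n.+1) \sum_(j : 'I_n.+1 | (i < j)%N) a i * a j =
    \sum_(i < n.+1) \sum_(j < n.+1 | (0 < val i)%N && (val i < val j)%N)
      pm R (x i) * pm R (x j).
  apply: eq_bigr => i _; case: (ltnP 0 i) => hi.
    by apply: eq_big => // j hij; rewrite /a hi (ltn_trans hi hij).
  rewrite [RHS]big_pred0 //; apply: big1 => j _.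
  by rewrite /a (_ : (0 < val i)%N = false) ?mul0r // ltnNge hi.
rewrite -cross tailE sqr_sum_ord squares.
move: (\sum_(i : 'I_n.+1) \sum_(j : 'I_n.+1 | (i < j)%N) a i * a j) => C; by field.
Qed.

Context {delta : R} {lam : vertex -> R} {b1 : 'I_n.+1 -> R} {b2 : 'I_n.+1 -> 'I_n.+1 -> R}.
Hypothesis b1E : forall i, b1 i = \sum_x lam x * pm R (x i).
Hypothesis b2E : forall i j, (val i < val j)%N ->
  b2 i j = \sum_x lam x * (pm R (x i) * pm R (x j)).

Lemma objective_avg : delta * K * alpha b1 + beta b1 = \sum_x lam x * form delta x.
Proof.
have -> : alpha b1 = b1 ord0.
  by rewrite /alpha (big_pred1 ord0) // => i; rewrite /= -val_eqE.
rewrite /beta (eq_bigr _ (fun i _ => b1E i)) exchange_big /= b1E big_distrr -big_split.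
apply: eq_bigr => x _; rewrite /form /tail mulrDr big_distrr /=.
by congr (_ + _); ring.
Qed.

Lemma Delta_avg : \sum_x lam x = 1 -> Ek delta n.+1 != 0 ->
  Delta delta b2 = \sum_x lam x *
    ((tail x ^+ 2 - (delta * K) ^+ 2 - 1) / ((delta * K) ^+ 2 - K + 2)).
Proof.
move=> lam1 E0.
have pairs : \sum_(i < n.+1) \sum_(j < n.+1 | (0 < val i)%N && (val i < val j)%N) b2 i j
    = \sum_x lam x * ((tail x ^+ 2 - n%:R) / 2).
  under eq_bigr => i _ do under eq_bigr => j /andP[_ hij] do rewrite (b2E _ _ hij).
  under eq_bigr => i _ do rewrite exchange_big.
  rewrite exchange_big; apply: eq_bigr => x _; rewrite -pair_sum_tail mulr_sumr.
  by apply: eq_bigr => i _; rewrite mulr_sumr.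
rewrite /Delta pairs mulr_suml -[X in _ - X]lam1 -sumrB.
apply: eq_bigr => x _; move: E0; rewrite /Ek -natr1 => E0; field.
by move: E0; apply: contra => /eqP E0; apply/eqP; lra.
Qed.

End Vertices.

Theorem lemma4p6 (R : archiRealFieldType) (delta0 : R) :
  0 < delta0 ->
  exists k0 : nat, forall (k : nat) (delta : R),
    (k0 <= k)%N ->
    delta0 <= delta -> delta <= 1 - 2 / k%:R ->
    (exists z : int, delta * k%:R + k%:R - 1 = (2 * z + 1)%:~R) ->
    forall (b1 : 'I_k -> R) (b2 : 'I_k -> 'I_k -> R),
      in_KTW delta b1 b2 ->
      delta * k%:R * alpha b1 + beta b1 >=
        (delta ^+ 2 * k%:R - 1) * `|Delta delta b2| / 4 + 1 / 2.
Proof.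
move=> d0; exists 0%N => k delta _ hd hd1 [z parity] b1 b2 [lam [lam0 lamP lam1 b1E b2E]].
case: k => [|n] in b1 b2 hd1 parity lam lam0 lamP lam1 b1E b2E *.
  suff : \sum_x lam x = 0 by rewrite lam1 => /eqP; rewrite oner_eq0.
  by apply: big1 => x _; apply: lamP; rewrite /Pfun big_ord0 sgr0 eq_sym oner_neq0.
set K : R := n.+1%:R in hd1 parity *; have K1 : 1 <= K by rewrite ler1n.
have D0K : 0 <= delta * K <= K.
  have : 0 <= 2 / K by apply: divr_ge0; lra.
  by move: hd1; move: (2 / K) => q ? ?; apply/andP; split; nra.
have t1 x : lam x != 0 -> 1 <= form delta x.
  by move=> lx; apply: (form_ge1 parity); apply/eqP; apply: contraNT lx => /lamP ->.
rewrite (objective_avg b1E).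
(* If c = delta^2 k - 1 <= 0 the claim reduces to the average of t being >= 1/2. *)
have [c0|c0] := lerP (delta ^+ 2 * K - 1) 0.
  apply: le_trans (average_bound (g := fun=> 0) (lexx 0) lam0 lam1 _); last first.
    by move=> x /t1; rewrite mul0r; lra.
  rewrite mul0r; have : 0 <= `|Delta delta b2| by [].
  move: (`|Delta delta b2|) => N; nra.
(* Otherwise E > 0 and the pointwise bound vertex_bound is averaged. *)
have KD : K < (delta * K) ^+ 2 by rewrite exprMn; nra.
rewrite (Delta_avg b2E) //; last by rewrite /Ek; apply: lt0r_neq0; nra.
have -> : delta ^+ 2 * K - 1 = (delta * K) ^+ 2 / K - 1 by field; lra.
apply: average_bound => //; first by apply: ltW; rewrite subr_gt0 ltr_pdivlMr; lra.
move=> x /t1 tx; apply: (vertex_bound K1 (tail_bound x) D0K tx _ erefl KD).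
by rewrite /pm; case: (x ord0); [left | right].
Qed.
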